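(* Let $x\in\mathbb{R}\setminus\{0\}$ and let $n,r$ be positive integers. Then \begin{enumerate} \item $\displaystyle\sum_{i=0}^{n}\frac{r}{r+i}(-1)^i\binom{n}{i}x^{r+i}=-\left(\sum_{i=1}^{r}x^{r-i}(1-x)^{n+i}\frac{P_i^{r}}{P_i^{n+i}}\right)+\frac{1}{\binom{n+r}{r}}$; \item $\displaystyle\sum_{i=0}^{n}\frac{r}{r+i}\binom{n}{i}x^{r+i}=\left(\sum_{i=1}^{r}(-1)^{i-1}x^{r-i}(1+x)^{n+i}\frac{P_i^{r}}{P_i^{n+i}}\right)+\frac{(-1)^r}{\binom{n+r}{r}}$. \end{enumerate}
   Context: For nonnegative integers $m$ and $i$, $P_i^{m}=m(m-1)\cdots(m-i+1)=\frac{m!}{(m-i)!}$ denotes the number of $i$-permutations of $m$ objects (falling factorial; $P_i^m=0$ if $i>m$). *)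

From mathcomp Require Import all_boot all_order all_algebra.
From mathcomp Require Export reals.
Set Implicit Arguments. Unset Strict Implicit. Unset Printing Implicit Defensive.

Definition perm_count (m i : nat) : nat := m ^_ i.

(* The left-hand side of (1) is the polynomial
     F(X) = r * \int_0^X t^(r-1) (1-t)^n dt   ([incomplete_beta]),
   expanded by the binomial theorem.  Integrating by parts r times, each time
   differentiating the power of t and integrating the power of 1-t, turns F
   into -T + c_r, where
     T(X) = \sum_(1 <= i <= r) c_i X^(r-i) (1-X)^(n+i)   ([parts_sum])
   and c_i = P_i^r / P_i^(n+i).  Formally: F + T has zero derivative (the
   derivatives of the terms of T telescope), so it is the constant
   F(0) + T(0) = c_r = 1 / 'C(n+r, r).  Identity (2) is (1) at -x, multiplied
   by (-1)^r. *)

From mathcomp Require Import all_boot all_order all_algebra.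
From mathcomp Require Import reals polyorder.
From mathcomp Require Import ring.
Set Implicit Arguments.
Unset Strict Implicit.
Unset Printing Implicit Defensive.

Import Order.TTheory GRing.Theory Num.Theory.
Local Open Scope ring_scope.

Lemma signr_subn {R : pzRingType} m k : (k <= m)%N ->
  (-1) ^+ (m - k) = (-1) ^+ m * (-1) ^+ k :> R.
Proof. by move=> lekm; rewrite -signr_odd oddB // signr_addb !signr_odd. Qed.

Section BetaIntegrationByParts.
Variable R : realFieldType.
Variables n r : nat.
Hypothesis r_gt0 : (0 < r)%N.

Definition ffact_ratio i : R := (r ^_ i)%:R / ((n + i) ^_ i)%:R.

Definition incomplete_beta : {poly R} :=
  \sum_(0 <= i < n.+1) (r%:R / (r + i)%:R * (-1) ^+ i * 'C(n, i)%:R) *: 'X^(r + i).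

Definition parts_sum : {poly R} :=
  \sum_(1 <= i < r.+1) ffact_ratio i *: ('X^(r - i) * (1 - 'X) ^+ (n + i)).

(* After j integrations by parts, F(X) = - (the first j terms of T(X))
   + \int_0^X parts_integrand j. *)
Definition parts_integrand j : {poly R} :=
  ((r - j)%:R * ffact_ratio j) *: ('X^((r - j).-1) * (1 - 'X) ^+ (n + j)).

Lemma ffact_ratio0 : ffact_ratio 0 = 1.
Proof. by rewrite /ffact_ratio !ffactn0 divr1. Qed.

Lemma ffact_ratio_last : ffact_ratio r = 1 / 'C(n + r, r)%:R.
Proof.
rewrite /ffact_ratio ffactnn -bin_ffact natrM.
have binC_neq0 : 'C(n + r, r)%:R != 0 :> R by rewrite pnatr_eq0 -lt0n bin_gt0 leq_addl.
have fact_neq0 : r`!%:R != 0 :> R by rewrite pnatr_eq0 -lt0n fact_gt0.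
by field; rewrite binC_neq0 fact_neq0.
Qed.

Lemma ffact_ratioS j :
  (r - j)%:R * ffact_ratio j = (n + j.+1)%:R * ffact_ratio j.+1.
Proof.
rewrite /ffact_ratio addnS ffactSS ffactnSr !natrM.
have ffact_neq0 : ((n + j) ^_ j)%:R != 0 :> R.
  by rewrite pnatr_eq0 -lt0n ffact_gt0 leq_addl.
have Sn_neq0 : 1 + (n%:R + j%:R) != 0 :> R by rewrite -natrD nat1r pnatr_eq0.
by field; rewrite ffact_neq0 Sn_neq0.
Qed.

Lemma deriv_incomplete_beta : incomplete_beta^`() = parts_integrand 0.
Proof.
rewrite /incomplete_beta /parts_integrand subn0 ffact_ratio0 mulr1 addn0.
case: r r_gt0 => // r' _.
rewrite raddf_sum /= big_mkord (addrC 1) exprD1n mulr_sumr scaler_sumr.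
apply: eq_bigr => i _.
rewrite derivZ derivXn addSn /= exprD -scaleN1r exprZn -!scaler_nat !scalerA.
rewrite -!scalerAr !scalerA; congr (_ *: _).
by field; rewrite -natrD nat1r pnatr_eq0.
Qed.

Lemma deriv_parts_term j :
  (ffact_ratio j.+1 *: ('X^(r - j.+1) * (1 - 'X) ^+ (n + j.+1)))^`()
  = parts_integrand j.+1 - parts_integrand j.
Proof.
rewrite derivZ derivM derivXn deriv_exp derivB derivX -polyC1 derivC.
rewrite /parts_integrand (ffact_ratioS j) -(subnS r j) addnS /=.
by rewrite -!mul_polyC !polyCM !polyC_natr /=; ring.
Qed.

Lemma deriv_parts_sum : parts_sum^`() = - parts_integrand 0.
Proof.
rewrite /parts_sum big_add1 raddf_sum /=.
transitivity (\sum_(0 <= j < r) (parts_integrand j.+1 - parts_integrand j)).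
  by apply: eq_big_nat => j _; rewrite deriv_parts_term.
by rewrite telescope_sumr // {1}/parts_integrand subnn mul0r scale0r sub0r.
Qed.

Lemma horner0_incomplete_beta : incomplete_beta.[0] = 0.
Proof.
rewrite horner_sum big1 // => i _.
by rewrite hornerZ hornerXn expr0n addn_eq0 gtn_eqF // mulr0.
Qed.

Lemma horner0_parts_sum : parts_sum.[0] = ffact_ratio r.
Proof.
rewrite horner_sum big_nat_recr //= big1_seq ?add0r.
  by rewrite subnn !hornerE subr0 expr1n /= !mulr1.
move=> i; rewrite mem_index_iota => /andP[_ /andP[_ ltir]].
by rewrite !hornerE expr0n subn_eq0 leqNgt ltir /= mulr0 mul0r.
Qed.

Lemma incomplete_beta_add_parts_sum :
  incomplete_beta + parts_sum = (1 / 'C(n + r, r)%:R)%:P.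
Proof.
set G := incomplete_beta + parts_sum.
have G'_eq0 : G^`() = 0.
  by rewrite derivD deriv_incomplete_beta deriv_parts_sum addrN.
have size_G : (size G <= 1)%N.
  by rewrite -subn_eq0 subn1 -size_deriv G'_eq0 size_poly0.
rewrite [G]size1_polyC // -horner_coef0 hornerD.
by rewrite horner0_incomplete_beta horner0_parts_sum add0r ffact_ratio_last.
Qed.

Lemma alternating_identity (x : R) :
  \sum_(0 <= i < n.+1) r%:R / (r + i)%:R * (-1) ^+ i * 'C(n, i)%:R * x ^+ (r + i)
  = - (\sum_(1 <= i < r.+1) x ^+ (r - i) * (1 - x) ^+ (n + i) * ffact_ratio i)
    + 1 / 'C(n + r, r)%:R.
Proof.
have -> : \sum_(1 <= i < r.+1) x ^+ (r - i) * (1 - x) ^+ (n + i) * ffact_ratio i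
          = parts_sum.[x].
  rewrite horner_sum; apply: eq_bigr => i _.
  by rewrite hornerZ hornerM hornerXn horner_exp hornerD hornerN hornerX hornerC mulrC.
rewrite -[1 / _](hornerC _ x) -incomplete_beta_add_parts_sum hornerD.
rewrite addrC addrK horner_sum.
by apply: eq_bigr => i _; rewrite hornerZ hornerXn.
Qed.

Lemma positive_identity (x : R) :
  \sum_(0 <= i < n.+1) r%:R / (r + i)%:R * 'C(n, i)%:R * x ^+ (r + i)
  = \sum_(1 <= i < r.+1)
      (-1) ^+ (i - 1) * x ^+ (r - i) * (1 + x) ^+ (n + i) * ffact_ratio i
    + (-1) ^+ r / 'C(n + r, r)%:R.
Proof.
have := alternating_identity (-x); rewrite opprK.
have -> : \sum_(0 <= i < n.+1)
            r%:R / (r + i)%:R * (-1) ^+ i * 'C(n, i)%:R * (- x) ^+ (r + i)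
          = (-1) ^+ r * \sum_(0 <= i < n.+1) r%:R / (r + i)%:R * 'C(n, i)%:R * x ^+ (r + i).
  rewrite mulr_sumr; apply: eq_bigr => i _.
  by rewrite [(- x) ^+ _]exprNn exprD -[RHS](signrMK i); ring.
have -> : \sum_(1 <= i < r.+1) (- x) ^+ (r - i) * (1 + x) ^+ (n + i) * ffact_ratio i
          = - ((-1) ^+ r * \sum_(1 <= i < r.+1)
                (-1) ^+ (i - 1) * x ^+ (r - i) * (1 + x) ^+ (n + i) * ffact_ratio i).
  rewrite -mulrN -sumrN mulr_sumr.
  apply: eq_big_nat => i /andP[i_gt0]; rewrite ltnS => le_ir.
  by rewrite [(- x) ^+ _]exprNn (signr_subn le_ir) (signr_subn i_gt0) expr1; ring.
by move=> h; rewrite -[LHS](signrMK r) h opprK mulrDr signrMK mulrA mulr1.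
Qed.

End BetaIntegrationByParts.

Theorem mainTheorem7 (R : realType) (x : R) (n r : nat)
  (hx : x != 0) (hn : (0 < n)%N) (hr : (0 < r)%N) :
  (\sum_(0 <= i < n.+1)
      (r%:R / (r + i)%:R) * (-1) ^+ i * ('C(n, i))%:R * x ^+ (r + i)
   = - (\sum_(1 <= i < r.+1)
          x ^+ (r - i) * (1 - x) ^+ (n + i)
          * ((perm_count r i)%:R / (perm_count (n + i) i)%:R))
     + 1 / ('C(n + r, r))%:R)
  /\
  (\sum_(0 <= i < n.+1)
      (r%:R / (r + i)%:R) * ('C(n, i))%:R * x ^+ (r + i)
   = (\sum_(1 <= i < r.+1)
          (-1) ^+ (i - 1) * x ^+ (r - i) * (1 + x) ^+ (n + i)
          * ((perm_count r i)%:R / (perm_count (n + i) i)%:R))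
     + (-1) ^+ r / ('C(n + r, r))%:R).
Proof.
by split; [exact: (alternating_identity n hr x) | exact: (positive_identity n hr x)].
Qed.
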